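(* Let $E$ be a reflexive real Banach space with norm $\|\cdot\|$, let $X$ be a real Banach space with $E\hookrightarrow X$ compactly, and let $I\in C^1(E,\mathbb{R})$ be of the form $I=J-N$, where $N\in C^1(E,\mathbb{R})$ and $J$ is $2$-homogeneous, i.e. $J(\tau u)=\tau^2J(u)$ for all $\tau\in\mathbb{R}$, $u\in E$. Assume: (H1) there exist $t\in(0,1)$ and a function $\psi:E\to[0,\infty)$, homogeneous of degree one, with $\|u\|_X\le\psi(u)^{1-t}\|u\|^t$ for all $u\in E$; (H2) there exist $a,c,\mu>0$ with $|\langle N'(u),u\rangle-2N(u)|\ge a\psi(u)^\mu-c$ for all $u\in E$; (H3) there is $k>0$ with $J(u)\ge k\|u\|^2$ for all $u\in E$; (H4) there exist $b,d>0$ and $q>2$ with $|N(u)|\le b\|u\|_X^q+d$ for all $u\in E$; and suppose $qt<2$. Then $I$ satisfies condition $(\hat C)_c$ for every $c\in\mathbb{R}$.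
   Context: $I$ satisfies $(\hat C)_c$ if every sequence $(u_n)\subset E$ with $I(u_n)\to c$ and $(1+\|u_n\|)\,\|I'(u_n)\|_{E^*}\to0$ has a bounded subsequence. *)

From HB Require Import structures.
From mathcomp Require Import all_boot all_order all_algebra.
From mathcomp Require Import all_classical all_reals all_analysis.
Set Implicit Arguments. Unset Strict Implicit. Unset Printing Implicit Defensive.
Import Order.TTheory GRing.Theory Num.Theory.
Import numFieldNormedType.Exports.
Local Open Scope classical_set_scope.
Local Open Scope ring_scope.

Section Defs.
Variable R : realType.

Definition is_linear_functional (E : normedModType R) (f : E -> R) : Prop :=
  forall (a : R) (x y : E), f (a *: x + y) = a * f x + f y.

Definition in_dual (E : normedModType R) (f : E -> R) : Prop :=
  is_linear_functional f /\ continuous f.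

Definition dual_norm (E : normedModType R) (f : E -> R) : R :=
  sup [set `|f x| | x in [set x : E | `|x| <= 1]].

Definition in_bidual (E : normedModType R) (Phi : (E -> R) -> R) : Prop :=
  (forall (a : R) (f g : E -> R), in_dual f -> in_dual g ->
      Phi (fun x => a * f x + g x) = a * Phi f + Phi g) /\
  (exists C : R, forall f : E -> R, in_dual f -> `|Phi f| <= C * dual_norm f).

(* reflexivity: the canonical embedding E -> E^{**} is surjective *)
Definition reflexive_space (E : normedModType R) : Prop :=
  forall Phi : (E -> R) -> R, in_bidual Phi ->
    exists x : E, forall f : E -> R, in_dual f -> Phi f = f x.

Definition compact_embedding (E X : normedModType R) (i : E -> X) : Prop :=
  (forall (a : R) (x y : E), i (a *: x + y) = a *: i x + i y) /\
  continuous i /\ injective i /\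
  (forall B : set E, (exists M : R, forall x, B x -> `|x| <= M) ->
     compact (closure (i @` B))).

(* I in C^1(E, R): Frechet differentiable everywhere, and u |-> I'(u)
   continuous for the operator norm of E^* *)
Definition C1 (E : normedModType R) (I : E -> R) : Prop :=
  (forall u : E, differentiable I u) /\
  (forall u : E, forall eps : R, 0 < eps -> exists delta : R, 0 < delta /\
     forall v : E, `|v - u| < delta ->
       forall h : E, `|'d I v h - 'd I u h| <= eps * `|h|).

Definition Chat (E : normedModType R) (I : E -> R) (c : R) : Prop :=
  forall u : nat -> E,
    (fun n => I (u n)) @ \oo --> c ->
    (fun n => (1 + `|u n|) * dual_norm ('d I (u n))) @ \oo --> (0 : R) ->
    exists (phi : nat -> nat) (M : R),
      (forall m n, (m < n)%N -> (phi m < phi n)%N) /\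
      (forall n, `|u (phi n)| <= M).

End Defs.

(* Along a sequence with I(u_n) -> c and (1 + |u_n|) |I'(u_n)| -> 0, both
   I(u_n) and I'(u_n)u_n are eventually bounded.  Euler's identity for the
   2-homogeneous J gives J'(u)u = 2 J(u), hence N'(u)u - 2 N(u) = 2 I(u) - I'(u)u
   is bounded as well, and (H2) bounds psi(u_n).  By (H1) and (H4),
   N(u_n) <= B |u_n|^(qt) + d, so (H3) yields
   k |u_n|^2 <= J(u_n) = I(u_n) + N(u_n) <= C + d + B |u_n|^(qt), with C a
   bound for |I(u_n)|; this bounds |u_n| because qt < 2. *)

From HB Require Import structures.
From mathcomp Require Import all_boot all_order all_algebra.
From mathcomp Require Import all_classical all_reals all_analysis.
From mathcomp Require Import ring lra.
Set Implicit Arguments. Unset Strict Implicit. Unset Printing Implicit Defensive.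
Import Order.TTheory GRing.Theory Num.Theory.
Import numFieldNormedType.Exports.
Local Open Scope classical_set_scope.
Local Open Scope ring_scope.

Lemma diff_homogeneous (R : realType) (E : normedModType R) (J : E -> R)
    (n : nat) (u : E) :
  (forall (tau : R) (v : E), J (tau *: v) = tau ^+ n * J v) ->
  differentiable J u -> 'd J u u = n%:R * J u.
Proof.
move=> J_hom dJ; rewrite -deriveE //.
(* along the ray through u, J is the polynomial h |-> (h + 1)^n J(u) *)
have -> : 'D_u J u = 'D_1 ((id + cst 1) ^+ n * cst (J u)) 0.
  rewrite /derive; do 2 f_equal; apply/funext => h /=.
  have -> : h *: u + u = (h + 1) *: u by rewrite scalerDl scale1r.
  by rewrite J_hom /= exprfctE /= -[h%:A]/(h * 1) mulr1 !addr0 !fctE /= add0r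
    expr1n mul1r.
by rewrite derive_val /= scaler0 add0r addr0 !fctE /= add0r expr1n mulr1
  -[_%:A]/(n%:R * 1) mulr1 mulrC.
Qed.

Lemma normr_le_dual_norm (R : realType) (E : normedModType R)
    (f : {linear E -> R}) :
  continuous f -> forall x, `|f x| <= dual_norm f * `|x|.
Proof.
move=> cf x.
have /linear_boundedP f_bounded := proj2 (linear_bounded_continuous f) cf.
near +oo_R => r.
have fr : forall x, `|f x| <= r * `|x| by near: r.
have r_gt0 : 0 < r by near: r; exact: nbhs_pinfty_gt.
have ub : has_ubound [set `|f x| | x in [set x : E | `|x| <= 1]].
  exists r => _ [y /= y1 <-]; apply: (le_trans (fr y)).
  by rewrite -[leRHS]mulr1 ler_wpM2l // ltW.
have [->|x0] := eqVneq x 0; first by rewrite linear0 !normr0 mulr0.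
have nx_gt0 : 0 < `|x| by rewrite normr_gt0.
have x_unit : [set `|f x| | x in [set x : E | `|x| <= 1]] `|f (`|x|^-1 *: x)|.
  exists (`|x|^-1 *: x) => //=.
  by rewrite normrZ ger0_norm ?invr_ge0 ?(ltW nx_gt0) // mulVf // lt0r_neq0.
have := ub_le_sup ub x_unit.
by rewrite linearZ normrM ger0_norm ?invr_ge0 ?(ltW nx_gt0) // ler_pdivrMl // mulrC.
Unshelve. all: by end_near. Qed.

Lemma powRK (R : realType) (x y : R) : 0 <= x -> y != 0 ->
  (x `^ y) `^ y^-1 = x.
Proof. by move=> x_ge0 y0; rewrite -powRrM mulfV // powRr1. Qed.

Lemma le_powR_inv (R : realType) (x mu P : R) : 0 <= x -> 0 < mu ->
  x `^ mu <= P -> x <= P `^ mu^-1.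
Proof.
move=> x_ge0 mu_gt0 xP; rewrite -[leLHS](powRK x_ge0 (lt0r_neq0 mu_gt0)).
apply: ge0_ler_powR; rewrite ?invr_ge0 ?(ltW mu_gt0) ?nnegrE ?powR_ge0 //.
exact: le_trans (powR_ge0 _ _) xP.
Qed.

Lemma sq_le_subquadratic_bound (R : realType) (r k A B s : R) :
  0 <= r -> 0 < k -> 0 <= A -> 0 <= B -> 0 <= s -> s < 2 ->
  k * r ^+ 2 <= A + B * r `^ s -> r <= 1 + ((A + B) / k) `^ (2 - s)^-1.
Proof.
move=> r_ge0 k_gt0 A_ge0 B_ge0 s_ge0 s_lt2 r_bound.
have [r_le1|r_gt1] := leP r 1; first by rewrite (le_trans r_le1) // lerDl powR_ge0.
have rs_ge1 : 1 <= r `^ s.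
  by rewrite -(powRr0 r) ler_powR // ltW.
have sq_split : r ^+ 2 = r `^ (2 - s) * r `^ s.
  rewrite -powRD; last by rewrite (gt_eqF (lt_trans ltr01 r_gt1)) implybT.
  by rewrite subrK -powR_mulrn.
have : k * r `^ (2 - s) <= A + B.
  rewrite -(ler_pM2r (lt_le_trans ltr01 rs_ge1)) -mulrA -sq_split mulrDl.
  by rewrite (le_trans r_bound) // lerD2r -[leLHS]mulr1 ler_wpM2l.
rewrite -ler_pdivlMl // mulrC => /le_powR_inv; rewrite subr_gt0 => /(_ r_ge0 s_lt2).
by move/le_trans; apply; rewrite lerDr.
Qed.

Section CeramiBound.
Variables (R : realType) (E X : normedModType R) (i : E -> X) (J N : E -> R).
Variables (t : R) (psi : E -> R) (a c0 mu k b d q : R).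

Let I u := J u - N u.

Hypothesis J_hom : forall (tau : R) (u : E), J (tau *: u) = tau ^+ 2 * J u.
Hypothesis I_diff : forall u, differentiable I u.
Hypothesis N_diff : forall u, differentiable N u.

Lemma dN_sub_2N u : 'd N u u - 2 * N u = 2 * I u - 'd I u u.
Proof.
have J_IN : J = I + N by apply/funext => v /=; rewrite /I subrK.
have J_diff : differentiable J u by rewrite J_IN; exact: differentiableD.
have := diff_homogeneous J_hom J_diff; rewrite {1}J_IN diffD //= /I; lra.
Qed.

Hypothesis psi_ge0 : forall u, 0 <= psi u.
Hypotheses (a_gt0 : 0 < a) (mu_gt0 : 0 < mu).
Hypothesis N_superquadratic :
  forall u, a * psi u `^ mu - c0 <= `|'d N u u - 2 * N u|.

Lemma psi_bounded C u : `|I u| <= C -> `|'d I u u| <= 1 ->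
  psi u <= ((2 * C + 1 + c0) / a) `^ mu^-1.
Proof.
move=> Iu_le dIu_le; apply: le_powR_inv => //.
have : `|2 * I u - 'd I u u| <= 2 * C + 1.
  apply: le_trans (ler_normB _ _) _; apply: lerD => //.
  by rewrite normrM ger0_norm // ler_wpM2l.
have := N_superquadratic u; rewrite dN_sub_2N ler_pdivlMr // => ? ?; lra.
Qed.

Hypotheses (t_gt0 : 0 < t) (t_lt1 : t < 1).
Hypothesis interpolation : forall u, `|i u| <= psi u `^ (1 - t) * `|u| `^ t.
Hypotheses (b_gt0 : 0 < b) (q_ge0 : 0 <= q).
Hypothesis N_growth : forall u, `|N u| <= b * `|i u| `^ q + d.

Lemma N_le_of_psi_le P u : psi u <= P ->
  N u <= b * P `^ ((1 - t) * q) * `|u| `^ (t * q) + d.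
Proof.
move=> psi_le; rewrite (le_trans (ler_norm _)) // (le_trans (N_growth u)) //.
rewrite lerD2r -mulrA ler_wpM2l ?(ltW b_gt0) //.
have iu_le : `|i u| <= P `^ (1 - t) * `|u| `^ t.
  apply: le_trans (interpolation u) _; rewrite ler_wpM2r ?powR_ge0 //.
  apply: ge0_ler_powR; rewrite ?nnegrE ?subr_ge0 ?(ltW t_lt1) //.
  exact: le_trans (psi_ge0 u) psi_le.
rewrite !powRrM -powRM ?powR_ge0 //.
by apply: ge0_ler_powR; rewrite ?nnegrE ?mulr_ge0 ?powR_ge0.
Qed.

Hypotheses (k_gt0 : 0 < k) (d_ge0 : 0 <= d) (qt_lt2 : q * t < 2).
Hypothesis J_coercive : forall u, k * `|u| ^+ 2 <= J u.

Lemma bounded_of_Cerami_bounds C : 0 <= C -> exists M, forall u,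
  `|I u| <= C -> `|'d I u u| <= 1 -> `|u| <= M.
Proof.
move=> C_ge0; set P := ((2 * C + 1 + c0) / a) `^ mu^-1.
set B := b * P `^ ((1 - t) * q).
exists (1 + ((C + d + B) / k) `^ (2 - t * q)^-1) => u Iu_le dIu_le.
have N_le := N_le_of_psi_le (psi_bounded Iu_le dIu_le).
apply: sq_le_subquadratic_bound;
  rewrite ?addr_ge0 ?mulr_ge0 ?powR_ge0 ?(ltW b_gt0) ?(ltW t_gt0) //.
- by rewrite mulrC.
- have := J_coercive u; move: Iu_le; rewrite /I ler_norml => /andP[? ?].
  rewrite /B /P; lra.
Qed.

End CeramiBound.

Theorem theorem2p2 (R : realType) (E X : completeNormedModType R)
  (i : E -> X) (J N : E -> R)
  (t : R) (psi : E -> R) (a c0 mu k b d q : R) :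
  reflexive_space E ->
  compact_embedding i ->
  C1 (fun u => J u - N u) ->
  C1 N ->
  (forall (tau : R) (u : E), J (tau *: u) = tau ^+ 2 * J u) ->
  (* (H1) *)
  0 < t < 1 ->
  (forall u, 0 <= psi u) ->
  (forall (tau : R) (u : E), 0 < tau -> psi (tau *: u) = tau * psi u) ->
  (forall u, `|i u| <= psi u `^ (1 - t) * `|u| `^ t) ->
  (* (H2) *)
  0 < a -> 0 < c0 -> 0 < mu ->
  (forall u, `|'d N u u - 2 * N u| >= a * psi u `^ mu - c0) ->
  (* (H3) *)
  0 < k ->
  (forall u, J u >= k * `|u| ^+ 2) ->
  (* (H4) *)
  0 < b -> 0 < d -> 2 < q ->
  (forall u, `|N u| <= b * `|i u| `^ q + d) ->
  q * t < 2 ->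
  forall c : R, Chat (fun u => J u - N u) c.
Proof.
move=> _ _ [I_diff _] [N_diff _] J_hom /andP[t_gt0 t_lt1] psi_ge0 _ interpolation
  a_gt0 _ mu_gt0 N_superquadratic k_gt0 J_coercive b_gt0 d_gt0 q_gt2 N_growth
  qt_lt2 c u Iu_c dIu_0.
set I := fun u => J u - N u in I_diff Iu_c dIu_0 *.
have q_ge0 : 0 <= q by rewrite ltW // (lt_trans _ q_gt2).
have [M u_bounded] := bounded_of_Cerami_bounds J_hom I_diff N_diff psi_ge0
  a_gt0 mu_gt0 N_superquadratic t_gt0 t_lt1 interpolation b_gt0 q_ge0 N_growth
  k_gt0 (ltW d_gt0) qt_lt2 J_coercive (addr_ge0 (normr_ge0 c) ler01).
have [n0 _ tail_bounded] : \forall n \near \oo,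
    `|I (u n)| <= `|c| + 1 /\ `|'d I (u n) (u n)| <= 1.
  near=> n; split.
  - have : `|c - I (u n)| < 1 by near: n; exact: cvgr_dist_lt.
    by move=> ?; rewrite -[I (u n)](subKr c) (le_trans (ler_normB _ _)) // lerD2l ltW.
  - have : `|0 - (1 + `|u n|) * dual_norm ('d I (u n))| < 1.
      by near: n; exact: cvgr_dist_lt.
    have := normr_le_dual_norm (diff_continuous (I_diff (u n))) (u n).
    rewrite sub0r normrN => slope_le weighted_lt.
    have := normr_ge0 (u n); have := ler_norm ((1 + `|u n|) * dual_norm ('d I (u n))).
    nra.
exists (fun n => (n + n0)%N), M; split => [m n mn|n]; first by rewrite ltn_add2r.
by have [] := tail_bounded (n + n0)%N (leq_addl _ _); exact: u_bounded.
Unshelve. all: by end_near. Qed.
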